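(* Let $\mathbb{P}_0=(\mathbb{P}_n)_{n\ge1}$ be an asymptotic law satisfying condition D and $\mathbf{G}_0=(G_n)_{n\ge1}$ an asymptotic regime satisfying condition E (with ranking function $\Lambda$ and proportion $\kappa^*$). Then for every $l\in\mathcal{L}$ with $Q_L(l)>0$ and every $i$, $\lim_{n\to\infty}q_{i,n}^*(1\mid l)=q_0^*(1\mid l)$, where $$q_0^*(1\mid l)=\begin{cases}\dfrac{\kappa^*-\mathbb{P}_0(\Lambda(L_i)>\omega_0)}{\mathbb{P}_0(\Lambda(L_i)=\omega_0)} & \text{if }\Lambda(l)=\omega_0,\\[2mm] I(\Lambda(l)>\omega_0) & \text{otherwise,}\end{cases}$$ with $\omega_0=\inf\{c\in\mathbb{R}:\mathbb{P}_0(\Lambda(L_i)>c)\le\kappa^*\}$, $\mathbb{P}_0(\Lambda(L_i)>c):=\sum_lQ_L(l)I(\Lambda(l)>c)$ and $\mathbb{P}_0(\Lambda(L_i)=c):=\sum_lQ_L(l)I(\Lambda(l)=c)$.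
   Context: Setting. For a cluster size $n\ge 1$, individuals $i=1,\dots,n$ have a covariate $L_i$ in a finite set $\mathcal{L}$, a binary treatment $A_i\in\{0,1\}$ and an outcome $Y_i$ in a finite set $\mathcal{Y}\subset\mathbb{R}$. Write $\mathbf{L}_n=(L_1,\dots,L_n)$ etc. The observed-data law $\mathbb{P}_n$ is generated by a structural equation model $L_i=f_{L_i}(\epsilon_{L_i})$, $A_i=f_{A_i}(\mathbf{L}_n,\epsilon_A)$ (arbitrary measurable $f_{A_i}$ and error $\epsilon_A$), $Y_i=f_{Y_i}(A_i,L_i,\epsilon_{Y_i})$. The model $\mathcal{M}_n^{AB}$ is the set of all such laws satisfying: (A1) (conditional noninterference) the $n$ error blocks $(\epsilon_{L_i},\epsilon_{Y_i})$, $i=1,\dots,n$, are mutually independent, and for each $i$, conditionally on $(A_i,L_i)$, $\epsilon_{Y_i}$ is independent of $(A_j,L_j,\epsilon_{Y_j})_{j\neq i}$; (A2) (structural invariance) $f_{L_i}=f_L$ and $f_{Y_i}=f_Y$ for all $i$; (A3) (identically distributed errors) the $\epsilon_{L_i}$ are identically distributed, and the conditional law of $\epsilon_{Y_i}$ given $(A_i,L_i)=b$ is the same for every $i$ (for which it is defined); (B1) (no individual-level confounding) for each $i$ and $a\in\{0,1\}$, $Y_i^{a}:=f_Y(a,L_i,\epsilon_{Y_i})$ is independent of $A_i$ given $L_i$. Under $\mathcal{M}_n^{AB}$ write $Q_L(l)=\mathbb{P}_n(L_i=l)$ and $Q_Y(y\mid a,l)=\mathbb{P}_n(Y_i=y\mid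 A_i=a,L_i=l)$ for any $i$ with $\mathbb{P}_n(A_i=a,L_i=l)>0$; these do not depend on $i$. Regimes. For $\kappa_n\in\{0,\dots,n\}$, $\Pi_n(\kappa_n)$ is the set of measurable maps $G_n:\mathcal{L}^n\times[0,1]\to\{0,1\}^n$ with $\sum_iG_n(\mathbf{l},u)_i=\kappa_n$. Given $G_n$, $\delta\sim\mathrm{Unif}[0,1]$ is independent of all errors, $A_i^{G_n+}=G_n(\mathbf{L}_n,\delta)_i$, $Y_i^{G_n}=f_Y(A_i^{G_n+},L_i,\epsilon_{Y_i})$; $\mathbb{P}_n^F$ is the joint law of factual and counterfactual variables, and $q^*_{i,n}(a\mid l)=\mathbb{P}_n^F(A_i^{G_n+}=a\mid L_i=l)$. Rank-preserving regimes. For $\Lambda:\mathcal{L}\to\mathbb{R}$, $\Pi^d_n(\kappa_n,L_i,\Lambda)\subset\Pi_n(\kappa_n)$ consists of the regimes that, given $\mathbf{L}_n$, set $\omega=\inf\{c\in\mathbb{R}:\#\{j:\Lambda(L_j)>c\}\le\kappa_n\}$ (with $\omega=-\infty$ if the set is all of $\mathbb{R}$), treat every $j$ with $\Lambda(L_j)>\omega$, and treat a uniformly random subset (chosen using $\delta$) of size $\kappa_n-\#\{j:\Lambda(L_j)>\omega\}$ of the individuals with $\Lambda(L_j)=\omega$, leaving everyone else untreated. Asymptotic laws and regimes. An asymptotic law is a sequence $\mathbb{P}_0=(\mathbb{P}_n)_{n\ge1}$, $\mathbb{P}_n$ a law for a cluster of size $n$. Condition D: (D1) $\mathbb{P}_n\in\mathcal{M}_n^{AB}$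 for all $n$; (D2) $f_L$, $f_Y$, the law of $\epsilon_{L_i}$ and the conditional law of $\epsilon_{Y_i}$ given $(A_i,L_i)$ are the same for all $n$ (so $Q_L$ and $Q_Y$ do not depend on $n$; the observed treatment mechanism may vary with $n$). An asymptotic regime is a sequence $\mathbf{G}_0=(G_n)_{n\ge1}$. Condition E: (E1) $G_n\in\Pi^d_n(\kappa_n,L_i,\Lambda)$ for every $n$, for one fixed $\Lambda$ not depending on $n$; (E2) $\kappa_n=\lfloor n\kappa^*\rfloor$ for a fixed $\kappa^*\in[0,1]$. *)

From HB Require Import structures.
From mathcomp Require Import all_boot all_order all_algebra.
From mathcomp Require Import all_classical all_reals all_analysis.
Set Implicit Arguments. Unset Strict Implicit. Unset Printing Implicit Defensive.
Import Order.TTheory GRing.Theory Num.Theory.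
Local Open Scope classical_set_scope.
Local Open Scope ring_scope.

Section Defs.
Variables (R : realType) (L : finType).

Definition is_pmf (Q : L -> R) : Prop :=
  (forall l, 0 <= Q l) /\ \sum_(l : L) Q l = 1.

Definition kappa_n (kappa : R) (n : nat) : nat := Num.truncn (n%:R * kappa).

(* omega = inf { c in R : #{ j : Lambda(L_j) > c } <= k }, valued in \bar R
   (it is -oo exactly when the set is all of R). *)
Definition omega_n (n : nat) (Lam : L -> R) (k : nat) (lv : {ffun 'I_n -> L})
  : \bar R :=
  ereal_inf [set c%:E | c in
     [set c : R | (#|[set j : 'I_n | (c < Lam (lv j))%R]| <= k)%N]].

Definition above_set n (Lam : L -> R) k (lv : {ffun 'I_n -> L}) : {set 'I_n} :=
  [set j : 'I_n | (omega_n Lam k lv < (Lam (lv j))%:E)%E].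

Definition ties_set n (Lam : L -> R) k (lv : {ffun 'I_n -> L}) : {set 'I_n} :=
  [set j : 'I_n | (Lam (lv j))%:E == omega_n Lam k lv].

(* A regime: maps (l_1..l_n, u) to the set of treated individuals
   (i.e. an element of {0,1}^n); u is the value of delta ~ Unif[0,1]. *)
Definition regime (n : nat) := {ffun 'I_n -> L} -> R -> {set 'I_n}.

Definition unit_itv : set R := [set u | 0 <= u <= 1].

Definition in_Pi n (k : nat) (G : regime n) : Prop :=
  (forall lv S, measurable [set u | unit_itv u /\ G lv u = S]) /\
  (forall lv u, unit_itv u -> #|G lv u| = k).

(* G in Pi^d_n(k, L_i, Lambda): treats everybody strictly above omega,
   plus a uniformly random subset (driven by delta ~ Unif[0,1]) of size
   k - #above of the individuals tied at omega, nobody else. *)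
Definition in_Pi_d n (k : nat) (Lam : L -> R) (G : regime n) : Prop :=
  in_Pi k G /\
  forall lv : {ffun 'I_n -> L},
    let A := above_set Lam k lv in
    let T := ties_set Lam k lv in
    let r := (k - #|A|)%N in
    (forall u, unit_itv u ->
       exists2 S : {set 'I_n}, (S \subset T) && (#|S| == r) & G lv u = A :|: S) /\
    (forall S : {set 'I_n}, S \subset T -> #|S| = r ->
       lebesgue_measure [set u | unit_itv u /\ G lv u = A :|: S]
         = ((('C(#|T|, r))%:R : R)^-1)%:E).

(* Joint law of (L_1..L_n) under condition D: i.i.d. with pmf Q_L. *)
Definition prodQ n (Q : L -> R) (lv : {ffun 'I_n -> L}) : R :=
  \prod_(j : 'I_n) Q (lv j).

(* q^*_{i,n}(1 | l) = P^F(A_i^{G_n+} = 1, L_i = l) / P(L_i = l), where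
   delta ~ Unif[0,1] is independent of L_n, and P(L_i = l) = Q_L(l).
   Individual i is given by its (0-based) index; for n <= i the value is 0. *)
Definition qstar n (Q : L -> R) (G : regime n) (i : nat) (l : L) : R :=
  (\sum_(lv : {ffun 'I_n -> L}) \sum_(j : 'I_n | val j == i)
     (lv j == l)%:R * prodQ Q lv *
     fine (lebesgue_measure [set u | unit_itv u /\ j \in G lv u])) / Q l.

Definition P0gt (Q : L -> R) (Lam : L -> R) (c : \bar R) : R :=
  \sum_(l : L) Q l * (c < (Lam l)%:E)%E%:R.
Definition P0eq (Q : L -> R) (Lam : L -> R) (c : \bar R) : R :=
  \sum_(l : L) Q l * ((Lam l)%:E == c)%:R.

Definition omega0 (Q : L -> R) (Lam : L -> R) (kappa : R) : \bar R :=
  ereal_inf [set c%:E | c in [set c : R | P0gt Q Lam c%:E <= kappa]].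

Definition q0 (Q : L -> R) (Lam : L -> R) (kappa : R) (l : L) : R :=
  let w := omega0 Q Lam kappa in
  if (Lam l)%:E == w then (kappa - P0gt Q Lam w) / P0eq Q Lam w
  else (w < (Lam l)%:E)%E%:R.

End Defs.

From HB Require Import structures.
From mathcomp Require Import all_boot all_order all_algebra.
From mathcomp Require Import all_classical all_reals all_analysis.
From mathcomp Require Import ring lra.
Set Implicit Arguments. Unset Strict Implicit. Unset Printing Implicit Defensive.
Import Order.TTheory GRing.Theory Num.Theory numFieldNormedType.Exports.
Local Open Scope classical_set_scope.
Local Open Scope ring_scope.

(* Given [L_i = l], a rank-preserving regime treats [i] with probability
   [clamp ((k - A) / T)], where [A] and [T] count the members of the cluster
   ranked strictly above, resp. tied with, [Lam l]; and [q0] is the same clamp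
   of [(kappa - P(Lam > Lam l)) / P(Lam = Lam l)]. Both facts come from one case
   analysis on the position of the threshold relative to [Lam l].
   The other individuals being i.i.d., [A] and [T] have means
   [(n - 1) P(Lam > Lam l)] and [(n - 1) P(Lam = Lam l) + 1] and variances at
   most [n]. Since clamp is 1-Lipschitz, Chebyshev's inequality bounds the
   expected error by [2 eps / P(Lam = Lam l) + (2 n + 1) / (gamma^2 n^2)],
   with [gamma] depending only on [eps]. *)

Section Clamp.
Variable R : realType.
Implicit Types y z : R.

Definition clamp y : R := if y <= 0 then 0 else if 1 <= y then 1 else y.

Lemma clamp_itv y : 0 <= clamp y <= 1.
Proof.
rewrite /clamp; case: (lerP y 0) => ?; first by apply/andP; split; lra.
by case: (lerP 1 y) => ?; apply/andP; split; lra.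
Qed.

Lemma clamp_lipschitz y z : `|clamp y - clamp z| <= `|y - z|.
Proof.
have := ler_norm (y - z); have := ler_norm (z - y); rewrite distrC => h1 h2.
rewrite /clamp ler_norml; case: (lerP y 0) => ?; case: (lerP 1 y) => ?;
  case: (lerP z 0) => ?; case: (lerP 1 z) => ?; apply/andP; split; lra.
Qed.

Lemma dist_clamp_le1 y z : `|clamp y - clamp z| <= 1.
Proof.
have := clamp_itv y; have := clamp_itv z => /andP[? ?] /andP[? ?].
by rewrite ler_norml; apply/andP; split; lra.
Qed.

End Clamp.

Lemma ler_norm_sqr (R : realType) (z c : R) :
  0 <= c -> z ^+ 2 <= c ^+ 2 -> `|z| <= c.
Proof. by move=> c0; rewrite -real_normK ?num_real // ler_pXn2r // nnegrE. Qed.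

(* With weights [Q_L] these are [P_0(Lam(L_i) > c)], [P_0(Lam(L_i) = c)] and
   [omega_0]; with unit weights on a cluster, the counts and [omega_n]. *)
Section Threshold.
Variables (R : realType) (I : finType) (w f : I -> R).

Definition mass_above (c : R) : R := \sum_a w a * (c < f a)%R%:R.
Definition mass_at (c : R) : R := \sum_a w a * (f a == c)%R%:R.
Definition threshold (K : R) : \bar R :=
  ereal_inf [set c%:E | c in [set c : R | mass_above c <= K]].

Lemma mass_above_addE (c : R) :
  mass_above c + mass_at c = \sum_a w a * (c <= f a)%R%:R.
Proof.
rewrite /mass_above /mass_at -big_split /=; apply: eq_bigr => a _.
rewrite -mulrDr le_eqVlt eq_sym.
by case: eqP => [->|_]; rewrite ?ltxx ?addr0 ?add0r.
Qed.

Lemma threshold_le (K x : R) : mass_above x <= K -> (threshold K <= x%:E)%E.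
Proof. by move=> h; apply: ereal_inf_lbound; exists x. Qed.

Hypothesis w_ge0 : forall a, 0 <= w a.

Lemma lt_threshold (K x : R) : K < mass_above x -> (x%:E < threshold K)%E.
Proof.
move=> Kx.
pose c1 := \big[Num.min/(x + 1)]_(a | x < f a) f a.
have x_lt_c1 : x < c1.
  rewrite /c1; apply: (big_ind (fun y => x < y)) => //; first lra.
  by move=> u v; rewrite lt_min => -> ->.
have c1_le a : x < f a -> c1 <= f a.
  by move=> xa; rewrite /c1 (bigD1 a) //= ge_min lexx.
apply: (@lt_le_trans _ _ c1%:E); first by rewrite lte_fin.
apply: le_ereal_inf_tmp => _ [c /= Kc <-]; rewrite lee_fin leNgt; apply/negP => c_lt.
move: Kc; apply/negP; rewrite -ltNge; apply: (lt_le_trans Kx).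
apply: ler_sum => a _; apply: ler_wpM2l => //.
have [xa|_] := ltP x (f a); last by rewrite ler0n.
by rewrite (lt_le_trans c_lt (c1_le a xa)).
Qed.

Lemma le_threshold (K x : R) :
  K < mass_above x + mass_at x -> (x%:E <= threshold K)%E.
Proof.
rewrite mass_above_addE => Kx.
apply: le_ereal_inf_tmp => _ [c /= Kc <-]; rewrite lee_fin leNgt; apply/negP => cx.
move: Kc; apply/negP; rewrite -ltNge; apply: (lt_le_trans Kx).
apply: ler_sum => a _; apply: ler_wpM2l => //.
by have [xa|] := leP x (f a); rewrite ?ler0n // (lt_le_trans cx xa).
Qed.

Lemma threshold_lt (K x : R) :
  mass_above x + mass_at x <= K -> (threshold K < x%:E)%E.
Proof.
rewrite mass_above_addE => Kx.
pose c0 := \big[Num.max/(x - 1)]_(a | f a < x) f a.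
have c0_lt_x : c0 < x.
  rewrite /c0; apply: (big_ind (fun y => y < x)) => //; first lra.
  by move=> u v; rewrite gt_max => -> ->.
have le_c0 a : f a < x -> f a <= c0.
  by move=> ax; rewrite /c0 (bigD1 a) //= le_max lexx.
apply: (@le_lt_trans _ _ c0%:E); last by rewrite lte_fin.
apply: threshold_le; apply: le_trans Kx; rewrite le_eqVlt; apply/orP; left; apply/eqP.
apply: eq_bigr => a _; congr (_ * _%:R).
have [xa|ax] := leP x (f a); first by rewrite (lt_le_trans c0_lt_x xa).
by rewrite ltNge le_c0.
Qed.

Lemma clamp_tie_fraction (K x : R) : 0 < mass_at x ->
  clamp ((K - mass_above x) / mass_at x) =
  if threshold K == x%:E then (K - mass_above x) / mass_at x
  else (threshold K < x%:E)%E%:R.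
Proof.
move=> e0; rewrite /clamp.
have [Kg|gK] := ltP K (mass_above x).
  have h := lt_threshold Kg.
  rewrite (gt_eqF h) ltNge (ltW h) /=.
  by rewrite pmulr_lle0 ?invr_gt0 // subr_le0 ltW.
have [Kge|geK] := ltP K (mass_above x + mass_at x).
  have -> : threshold K = x%:E.
    by apply/eqP; rewrite eq_le threshold_le // le_threshold.
  rewrite eqxx ler_pdivrMr // mul0r subr_le0 ler_pdivlMr // mul1r.
  case: lerP => [Kg|_]; last by case: lerP => //; lra.
  have -> : K = mass_above x by apply/eqP; rewrite eq_le Kg.
  by rewrite subrr mul0r.
have h := threshold_lt geK.
rewrite (lt_eqF h) h /= ler_pdivrMr // mul0r ler_pdivlMr // mul1r.
by case: lerP => h1; [lra | case: lerP => //; lra].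
Qed.

End Threshold.

(* [G] and [E] are the counts above and at the tie level in a cluster of
   [N] individuals of which one is known to be tied; [t] is the limiting
   tie fraction. *)
Section ClampRatio.
Variables (R : realType) (N kappa k g e t G E eps gamma : R).
Hypotheses (kappa_itv : 0 <= kappa <= 1) (k_floor : N * kappa - 1 < k <= N * kappa).
Hypotheses (e_itv : 0 < e <= 1) (kappaE : kappa = g + t * e).
Hypotheses (gamma_gt0 : 0 < gamma) (gamma_le : gamma <= e / 4).
Hypothesis gamma_eps : gamma * (3 + 2 * `|t|) <= eps.

Let eps_gt0 : 0 < eps.
Proof.
by apply: lt_le_trans gamma_eps; rewrite mulr_gt0 //; have := normr_ge0 t; lra.
Qed.

Lemma clamp_ratio_close :
  `|G - (N - 1) * g| <= gamma * N -> `|E - ((N - 1) * e + 1)| <= gamma * N ->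
  1 <= gamma * N ->
  `|clamp ((k - G) / E) - clamp t| <= 2 * eps / e.
Proof.
set ZG := G - (N - 1) * g; set ZE := E - ((N - 1) * e + 1) => hZG hZE h1.
case/andP: kappa_itv => ka0 ka1; case/andP: k_floor => k1 k2.
case/andP: e_itv => e0 e1.
have N0 : 0 < N by rewrite -(pmulr_rgt0 N gamma_gt0) (lt_le_trans ltr01 h1).
have gNe : gamma * N <= e / 4 * N by rewrite ler_wpM2r // ltW.
have hE : N * e / 2 <= E by move: hZE; rewrite ler_norml /ZE => /andP[? ?]; nra.
have E0 : 0 < E by apply: lt_le_trans hE; rewrite divr_gt0 ?mulr_gt0.
have devE : (k - G) - t * E = (k - N * kappa) + kappa - t - ZG - t * ZE.
  by rewrite /ZG /ZE kappaE; ring.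
have hD : `|(k - G) - t * E| <= eps * N.
  have a1 : `|k - N * kappa| <= 1 by rewrite ler_norml; apply/andP; split; lra.
  have a2 : `|kappa| <= 1 by rewrite ger0_norm.
  have a3 : `|t * ZE| <= `|t| * (gamma * N) by rewrite normrM ler_wpM2l.
  have b1 : `|(k - G) - t * E| <=
      `|k - N * kappa| + `|kappa| + `|t| + `|ZG| + `|t * ZE|.
    rewrite devE; apply: le_trans (ler_normB _ _) _; rewrite lerD2r.
    apply: le_trans (ler_normB _ _) _; rewrite lerD2r.
    apply: le_trans (ler_normB _ _) _; rewrite lerD2r.
    exact: ler_normD.
  apply: le_trans b1 _.
  have : gamma * N * (3 + 2 * `|t|) <= eps * N.
    by rewrite mulrAC ler_wpM2r // ltW.
  have := normr_ge0 t; nra.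
apply: le_trans (clamp_lipschitz _ _) _.
have -> : (k - G) / E - t = ((k - G) - t * E) / E by field; lra.
rewrite normrM normfV (gtr0_norm E0) ler_pdivrMr //; apply: le_trans hD _.
have : 2 * eps / e * (N * e / 2) = eps * N by field; lra.
have : 2 * eps / e * (N * e / 2) <= 2 * eps / e * E.
  by rewrite ler_wpM2l // divr_ge0 ?mulr_ge0 // ltW.
lra.
Qed.

(* Markov's inequality in disguise: on the event where the deviations are
   large, the error term on the right already exceeds 1. *)
Lemma clamp_ratio_le : 0 < N ->
  `|clamp ((k - G) / E) - clamp t| <= 2 * eps / e +
    ((G - (N - 1) * g) ^+ 2 + (E - ((N - 1) * e + 1)) ^+ 2 + 1) /
      (gamma ^+ 2 * N ^+ 2).
Proof.
move=> N0; set W := _ + _ + 1.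
have M0 : 0 < gamma ^+ 2 * N ^+ 2 by rewrite -exprMn exprn_gt0 ?mulr_gt0.
have eps2 : 0 <= 2 * eps / e.
  by case/andP: e_itv => e0 _; rewrite divr_ge0 ?mulr_ge0 // ltW.
have [WM|MW] := lerP W (gamma ^+ 2 * N ^+ 2); last first.
  have := dist_clamp_le1 ((k - G) / E) t.
  have : 1 <= W / (gamma ^+ 2 * N ^+ 2) by rewrite ler_pdivlMr // mul1r ltW.
  lra.
have gN0 : 0 <= gamma * N by rewrite mulr_ge0 // ltW.
have dev_le z : z ^+ 2 <= W -> `|z| <= gamma * N.
  by move=> zW; apply: ler_norm_sqr => //; rewrite exprMn (le_trans zW).
have := sqr_ge0 (G - (N - 1) * g); have := sqr_ge0 (E - ((N - 1) * e + 1)).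
rewrite -/W => sqE sqG.
have W0 : 0 <= W / (gamma ^+ 2 * N ^+ 2) by rewrite divr_ge0 ?ltW // /W; lra.
suff : `|clamp ((k - G) / E) - clamp t| <= 2 * eps / e by lra.
apply: clamp_ratio_close; try by apply: dev_le; rewrite /W; lra.
by rewrite -(normr1 R); apply: dev_le; rewrite expr1n /W; lra.
Qed.

End ClampRatio.

Section ProductPmf.
Variables (R : realType) (L : finType) (n : nat) (nu : 'I_n -> L -> R).
Hypotheses (nu_ge0 : forall i m, 0 <= nu i m) (nu_sum1 : forall i, \sum_m nu i m = 1).

Definition prod_pmf (lv : {ffun 'I_n -> L}) : R := \prod_i nu i (lv i).

Definition sqr_dev (h : L -> R) (lv : {ffun 'I_n -> L}) : R :=
  (\sum_j h (lv j) - \sum_j \sum_m nu j m * h m) ^+ 2.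

Lemma prod_pmf_ge0 lv : 0 <= prod_pmf lv.
Proof. exact: prodr_ge0. Qed.

Lemma sum_prod_pmf_prod (h : 'I_n -> L -> R) :
  \sum_lv prod_pmf lv * \prod_i h i (lv i) = \prod_i \sum_m nu i m * h i m.
Proof.
rewrite bigA_distr_bigA; apply: eq_bigr => lv _.
by rewrite /prod_pmf -big_split.
Qed.

Lemma sum_prod_pmf : \sum_lv prod_pmf lv = 1.
Proof.
by rewrite /prod_pmf -bigA_distr_bigA big1 // => i _; apply: nu_sum1.
Qed.

Let indicator_prod (a : 'I_n) (h : L -> R) (lv : {ffun 'I_n -> L}) :
  \prod_i (if i == a then h else fun=> 1) (lv i) = h (lv a).
Proof.
by rewrite (bigD1 a) //= eqxx big1 ?mulr1 // => i /negbTE ->.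
Qed.

Lemma sum_prod_pmf_marginal (a : 'I_n) (h : L -> R) :
  \sum_lv prod_pmf lv * h (lv a) = \sum_m nu a m * h m.
Proof.
under eq_bigr do rewrite -(indicator_prod a h).
rewrite (sum_prod_pmf_prod (fun i => if i == a then h else fun=> 1)).
rewrite (bigD1 a) //= eqxx [X in _ * X]big1 ?mulr1 // => i /negbTE ia.
by under eq_bigr do rewrite ia /= mulr1; apply: nu_sum1.
Qed.

Lemma sum_prod_pmf_marginal2 (a b : 'I_n) (h1 h2 : L -> R) : a != b ->
  \sum_lv prod_pmf lv * (h1 (lv a) * h2 (lv b)) =
  (\sum_m nu a m * h1 m) * (\sum_m nu b m * h2 m).
Proof.
move=> ab; have ba : (b == a) = false by rewrite eq_sym (negbTE ab).
pose h i := if i == a then h1 else if i == b then h2 else fun=> 1.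
have hE lv : h1 (lv a) * h2 (lv b) = \prod_i h i (lv i).
  rewrite (bigD1 a) //= (bigD1 b) 1?eq_sym //= big1 ?mulr1 /h ?eqxx ?ba //.
  by move=> i /andP[/negbTE -> /negbTE ->].
under eq_bigr do rewrite hE.
rewrite (sum_prod_pmf_prod h) (bigD1 a) //= (bigD1 b) 1?eq_sym //=.
rewrite [X in _ * (_ * X)]big1 ?mulr1 /h ?eqxx ?ba // => i /andP[/negbTE ia /negbTE ib].
by under eq_bigr do rewrite ia ib /= mulr1; apply: nu_sum1.
Qed.

(* The cross terms vanish by independence, and each diagonal term is at most 1. *)
Lemma sum_prod_pmf_sqr_sum_le (Z : 'I_n -> L -> R) :
  (forall i, \sum_m nu i m * Z i m = 0) -> (forall i m, Z i m ^+ 2 <= 1) ->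
  \sum_lv prod_pmf lv * (\sum_i Z i (lv i)) ^+ 2 <= n%:R.
Proof.
move=> Z_centered Z_le1.
have -> : \sum_lv prod_pmf lv * (\sum_i Z i (lv i)) ^+ 2 =
    \sum_i \sum_j \sum_lv prod_pmf lv * (Z i (lv i) * Z j (lv j)).
  under eq_bigr do rewrite expr2 big_distrlr big_distrr /=.
  rewrite exchange_big; apply: eq_bigr => i _.
  by under eq_bigr do rewrite big_distrr /=; rewrite exchange_big.
rewrite -[n in _ <= n%:R]card_ord -sumr_const; apply: ler_sum => i _.
rewrite (bigD1 i) //= [X in _ + X]big1 ?addr0 => [|j ji]; last first.
  by rewrite (@sum_prod_pmf_marginal2 i j (Z i) (Z j)) 1?eq_sym // Z_centered mul0r.
under eq_bigr do rewrite -expr2.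
rewrite (sum_prod_pmf_marginal i (fun m => Z i m ^+ 2)) -(nu_sum1 i).
by apply: ler_sum => m _; rewrite ler_piMr.
Qed.

Lemma sum_prod_pmf_sqr_dev_le (X : L -> R) : (forall m, 0 <= X m <= 1) ->
  \sum_lv prod_pmf lv * sqr_dev X lv <= n%:R.
Proof.
move=> X01; pose mu j := \sum_m nu j m * X m.
have mu01 j : 0 <= mu j <= 1.
  rewrite sumr_ge0 => [|m _]; last by rewrite mulr_ge0 //; case/andP: (X01 m).
  rewrite -(nu_sum1 j); apply: ler_sum => m _.
  by rewrite ler_piMr //; case/andP: (X01 m).
under eq_bigr do rewrite /sqr_dev -sumrB.
apply: (sum_prod_pmf_sqr_sum_le (Z := fun j m => X m - mu j)) => [j|j m].
  under eq_bigr do rewrite mulrBr.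
  by rewrite sumrB -mulr_suml nu_sum1 mul1r subrr.
by have := mu01 j; have := X01 m => /andP[? ?] /andP[? ?]; nra.
Qed.

End ProductPmf.

Lemma card_draws_containing (T : finType) (A : {set T}) (x : T) (r : nat) :
  x \in A ->
  (#|[set S : {set T} | (S \subset A) && (#|S| == r) && (x \in S)]%SET| * #|A|
   = r * 'C(#|A|, r))%N.
Proof.
move=> xA; case: r => [|r].
  rewrite mul0n; apply/eqP; rewrite muln_eq0 cards_eq0; apply/orP; left.
  apply/eqP/setP => S; rewrite !inE; apply/negbTE/negP.
  by case/andP => /andP[_ /eqP/cards0_eq ->]; rewrite inE.
pose D := [set B : {set T} | B \subset A :\ x & #|B| == r]%SET.
have xD B : B \in D -> x \notin B.
  by rewrite inE => /andP[/fintype.subsetP BA _]; apply/negP => /BA; rewrite !inE eqxx.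
have -> : [set S : {set T} | (S \subset A) && (#|S| == r.+1) && (x \in S)]%SET
    = (fun B => x |: B) @: D.
  apply/setP => S; rewrite inE; apply/idP/imsetP.
    move=> /andP[/andP[SA /eqP cS] xS]; exists (S :\ x); last by rewrite finset.setD1K.
    rewrite inE finset.setSD //=.
    by move: cS; rewrite (cardsD1 x) xS add1n => -[->].
  move=> [B BD ->]; move: (BD); rewrite inE => /andP[BA /eqP cB].
  rewrite finset.setU11 andbT cardsU1 xD // cB eqxx andbT.
  rewrite finset.subUset finset.sub1set xA /=.
  exact: fintype.subset_trans BA (finset.subD1set _ _).
rewrite card_in_imset => [|B1 B2 /xD x1 /xD x2 e]; last first.
  by rewrite -(finset.setU1K x1) e finset.setU1K.
by rewrite cards_draws mulnC (cardsD1 x A) xA -mul_bin_diag.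
Qed.

Section Counts.
Variables (R : realType) (I : finType) (f : I -> R).

Lemma mass_above1E (c : R) :
  mass_above (fun=> 1) f c = #|[set a | c < f a]%SET|%:R.
Proof.
rewrite -sum1_card natr_sum big_mkcond /=; apply: eq_bigr => a _.
by rewrite inE mul1r; case: (c < f a).
Qed.

Lemma mass_at1E (c : R) :
  mass_at (fun=> 1) f c = #|[set a | f a == c]%SET|%:R.
Proof.
rewrite -sum1_card natr_sum big_mkcond /=; apply: eq_bigr => a _.
by rewrite inE mul1r; case: (f a == c).
Qed.

End Counts.

Lemma omega_nE (R : realType) (L : finType) (Lam : L -> R) (n k : nat)
    (lv : {ffun 'I_n -> L}) :
  omega_n Lam k lv = threshold (fun=> 1) (fun j => Lam (lv j)) k%:R.
Proof.
rewrite /omega_n /threshold; congr ereal_inf; congr image; apply/funext => c /=.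
rewrite mass_above1E ler_nat; congr (_ <= _)%N; apply: eq_card => j.
by rewrite [in RHS]inE; apply/idP/idP => [/set_mem|/mem_set].
Qed.

Definition treat_prob (R : realType) (L : finType) (n : nat) (G : regime R L n)
    (lv : {ffun 'I_n -> L}) (j : 'I_n) : R :=
  fine (lebesgue_measure [set u | unit_itv u /\ j \in G lv u]).

Section RankPreservingRegime.
Variables (R : realType) (L : finType) (Lam : L -> R) (n k : nat).
Variables (G : regime R L n) (lv : {ffun 'I_n -> L}).
Hypothesis G_Pi_d : in_Pi_d k Lam G.

Local Notation A := (above_set Lam k lv).
Local Notation T := (ties_set Lam k lv).

Let G_form u : unit_itv u -> exists2 S : {set 'I_n},
  (S \subset T) && (#|S| == (k - #|A|)%N) & G lv u = A :|: S.
Proof. by case: G_Pi_d => _ /(_ lv) [+ _]; apply. Qed.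

Let notin_above_of_tie j : j \in T -> j \notin A.
Proof. by rewrite !inE => /eqP <-; rewrite ltxx. Qed.

Let above_setU_tiesI (S : {set 'I_n}) : S \subset T -> (A :|: S) :&: T = S.
Proof.
move=> ST; apply/setP => i; rewrite finset.in_setI finset.in_setU.
case iS: (i \in S); first by rewrite orbT (fintype.subsetP ST).
by case iT: (i \in T); rewrite ?andbF // (negbTE (notin_above_of_tie iT)).
Qed.

Let unit_itv0 : @unit_itv R 0.
Proof. by rewrite /unit_itv /=; apply/andP; split; rewrite ?lexx ?ler01. Qed.

Lemma card_above_le : (#|A| <= k)%N.
Proof.
have [S _ GS] := G_form unit_itv0; have [[_ card_G] _] := G_Pi_d.
apply: leq_trans (subset_leq_card (finset.subsetUl A S)) _.
by rewrite -GS card_G.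
Qed.

Lemma treat_prob_above j : j \in A -> treat_prob G lv j = 1.
Proof.
move=> jA; rewrite /treat_prob.
have -> : [set u | unit_itv u /\ j \in G lv u] = [set` `[(0 : R), 1]].
  apply/seteqP; split => u /=; rewrite in_itv /=; first by case.
  by move=> u01; split => //; have [S _ ->] := G_form u01; rewrite inE jA.
by rewrite lebesgue_measure_itv /= lte_fin ltr01 oppr0 adde0.
Qed.

Lemma treat_prob_untied j : j \notin A -> j \notin T -> treat_prob G lv j = 0.
Proof.
move=> jA jT; rewrite /treat_prob.
have -> : [set u | unit_itv u /\ j \in G lv u] = set0.
  apply/seteqP; split => // u [u01]; have [S /andP[ST _] ->] := G_form u01.
  by rewrite inE (negbTE jA) /= => /(fintype.subsetP ST); rewrite (negbTE jT).
by rewrite measure0.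
Qed.

(* [j] is treated iff the uniformly drawn set of [k - #|A|] tied individuals
   contains it, which is the case for a fraction [(k - #|A|) / #|T|] of the
   draws. *)
Lemma treat_prob_tie j : j \in T ->
  treat_prob G lv j = (k%:R - #|A|%:R) / #|T|%:R.
Proof.
move=> jT; pose r := (k - #|A|)%N.
have [[Gm _] G_unif] := G_Pi_d; have {G_unif} [_ G_unif] := G_unif lv.
pose SS := [set S : {set 'I_n} | (S \subset T) && (#|S| == r) && (j \in S)]%SET.
pose F S := [set u | unit_itv u /\ G lv u = A :|: S].
have setE : [set u | unit_itv u /\ j \in G lv u] = \bigcup_(S in [set` enum SS]) F S.
  apply/seteqP; split => u /=.
    move=> [u01 jG]; have [S /andP[ST /eqP cS] GS] := G_form u01.
    exists S; last by [].
    move: jG; rewrite /= mem_enum inE ST cS eqxx GS inE.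
    by rewrite (negbTE (notin_above_of_tie jT)).
  move=> [S]; rewrite /= mem_enum inE => /andP[_ jS] [u01 GS].
  by split => //; rewrite GS inE jS orbT.
rewrite /treat_prob setE measure_fin_bigcup //; first last.
- by move=> S _; apply: Gm.
- move=> S S'; rewrite /= !mem_enum !inE => /andP[/andP[ST _] _] /andP[/andP[S'T _] _].
  move=> [u [[_ GS] [_ GS']]].
  by rewrite -(above_setU_tiesI ST) -(above_setU_tiesI S'T) -GS -GS'.
rewrite -fsbig_seq ?enum_uniq // big_enum /=.
have -> : (\sum_(S in SS) lebesgue_measure (F S) =
    (#|SS|%:R / 'C(#|T|, r)%:R)%:E)%E.
  rewrite (eq_bigr (fun=> ('C(#|T|, r)%:R^-1)%:E)) => [|S].
    by rewrite sumEFin sumr_const mulr_natl.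
  by rewrite inE => /andP[/andP[ST cS] _]; exact: G_unif ST (eqP cS).
have r_le : (r <= #|T|)%N.
  have [S /andP[ST /eqP cS] _] := G_form unit_itv0.
  by rewrite /r -cS; apply: subset_leq_card.
have T0 : (#|T|%:R : R) != 0 by rewrite pnatr_eq0 -lt0n; apply/card_gt0P; exists j.
have C0 : ('C(#|T|, r)%:R : R) != 0 by rewrite pnatr_eq0 -lt0n bin_gt0.
have cnt : (#|SS|%:R * #|T|%:R : R) = r%:R * 'C(#|T|, r)%:R.
  by rewrite -!natrM card_draws_containing.
rewrite /= -natrB ?card_above_le // -/r; apply: (mulIf T0); apply: (mulIf C0).
by rewrite mulrAC divfK // cnt divfK // mulrC.
Qed.

Lemma treat_prob_clamp j :
  treat_prob G lv j = clamp ((k%:R -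
      mass_above (fun=> 1) (fun i => Lam (lv i)) (Lam (lv j))) /
      mass_at (fun=> 1) (fun i => Lam (lv i)) (Lam (lv j))).
Proof.
set x := Lam (lv j).
have at_gt0 : 0 < mass_at (fun=> 1) (fun i => Lam (lv i)) x.
  by rewrite mass_at1E ltr0n; apply/card_gt0P; exists j; rewrite inE.
rewrite clamp_tie_fraction //.
case: ltgtP => [w_lt|w_gt|w_eq].
- by rewrite treat_prob_above // inE omega_nE.
- by rewrite treat_prob_untied // !inE omega_nE ?lt_eqF // -leNgt ltW.
rewrite treat_prob_tie ?inE ?omega_nE ?w_eq // mass_above1E mass_at1E.
congr ((_%:R - _%:R) / _%:R); apply: eq_card => i.
  by rewrite !inE omega_nE w_eq lte_fin.
by rewrite !inE omega_nE w_eq eqe.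
Qed.

End RankPreservingRegime.

Lemma quadratic_tail_le (R : realType) (c eps N : R) :
  0 < c -> 0 < eps -> 1 <= N -> 3 / (c * eps) <= N ->
  (2 * N + 1) / (c * N ^+ 2) <= eps.
Proof.
move=> c0 eps0 N1 N_ge; have ceps0 : 0 < c * eps by rewrite mulr_gt0.
have N3 : 3 <= c * eps * N by rewrite mulrC -ler_pdivrMr.
have N0 : 0 < N by lra.
rewrite ler_pdivrMr ?mulr_gt0 ?exprn_gt0 //.
have : 3 * N <= c * eps * N * N by rewrite ler_wpM2r //; lra.
have -> : eps * (c * N ^+ 2) = c * eps * N * N by rewrite expr2; ring.
lra.
Qed.

Section ConditionalLaw.
Variables (R : realType) (L : finType) (Q : L -> R) (n : nat) (j0 : 'I_n) (l : L).

(* The law of [L_n] given [L_j0 = l] under i.i.d. sampling from [Q]. *)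
Definition cond_pmf (j : 'I_n) (m : L) : R := if j == j0 then (m == l)%:R else Q m.

Lemma sum_cond_pmf_mean (h : L -> R) :
  \sum_j \sum_m cond_pmf j m * h m = (n%:R - 1) * \sum_m Q m * h m + h l.
Proof.
have delta : \sum_m (m == l)%:R * h m = h l.
  by rewrite (bigD1 l) //= eqxx mul1r big1 ?addr0 // => m /negbTE ->; rewrite mul0r.
rewrite (bigD1 j0) //= /cond_pmf eqxx delta addrC; congr (_ + _).
rewrite (eq_bigr (fun=> \sum_m Q m * h m)) => [|j /negbTE -> //].
rewrite sumr_const cardC1 card_ord -[_ *+ n.-1]mulr_natl; congr (_ * _).
by case: n j0 => [[]//|n' _]; rewrite /= -addn1 natrD addrK.
Qed.

Lemma qstar_cond_expectation (G : regime R L n) : Q l != 0 ->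
  qstar Q G (val j0) l = \sum_lv prod_pmf cond_pmf lv * treat_prob G lv j0.
Proof.
move=> Ql; apply: (mulIf Ql); rewrite /qstar divfK // big_distrl /=.
apply: eq_bigr => lv _; rewrite big_pred1_eq.
have prodE : prod_pmf cond_pmf lv * Q l = (lv j0 == l)%:R * prodQ Q lv.
  rewrite /prod_pmf /prodQ (bigD1 j0) //= [in RHS](bigD1 j0) //= /cond_pmf eqxx.
  rewrite (eq_bigr (fun j => Q (lv j))) => [|j /negbTE -> //].
  by case: eqP => [->|_]; rewrite ?eqxx ?mul0r // !mul1r mulrC.
by rewrite -prodE mulrAC.
Qed.

End ConditionalLaw.

Section Convergence.
Variables (R : realType) (L : finType) (Q Lam : L -> R) (kappa : R) (l : L).
Hypotheses (Q_pmf : is_pmf Q) (kappa_itv : 0 <= kappa <= 1) (Q_l_gt0 : 0 < Q l).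

Local Notation g := (mass_above Q Lam (Lam l)).
Local Notation e := (mass_at Q Lam (Lam l)).
Local Notation t := ((kappa - g) / e).

Let Q_ge0 m : 0 <= Q m. Proof. by case: Q_pmf. Qed.

Lemma mass_at_gt0 : 0 < e.
Proof.
apply: lt_le_trans Q_l_gt0 _; rewrite /mass_at (bigD1 l) //= eqxx mulr1 lerDl.
by rewrite sumr_ge0 // => m _; rewrite mulr_ge0.
Qed.

Lemma mass_at_le1 : e <= 1.
Proof.
case: Q_pmf => _ <-; apply: ler_sum => m _.
by rewrite ler_piMr //; case: (_ == _); rewrite ?ler01 ?lexx.
Qed.

Lemma q0_clamp : q0 Q Lam kappa l = clamp t.
Proof.
have P0gtE c : P0gt Q Lam c%:E = mass_above Q Lam c.
  by apply: eq_bigr => m _; rewrite lte_fin.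
have P0eqE c : P0eq Q Lam c%:E = mass_at Q Lam c.
  by apply: eq_bigr => m _; rewrite eqe.
rewrite /q0; have -> : omega0 Q Lam kappa = threshold Q Lam kappa.
  by congr ereal_inf; congr image; apply/funext => c /=; rewrite P0gtE.
rewrite clamp_tie_fraction ?mass_at_gt0 //.
by case: eqVneq => [<-|//]; rewrite P0gtE P0eqE.
Qed.

Section Cluster.
Variables (n : nat) (G : regime R L n) (j0 : 'I_n) (eps gamma : R).
Hypotheses (G_Pi_d : in_Pi_d (kappa_n kappa n) Lam G) (gamma_gt0 : 0 < gamma).
Hypotheses (gamma_le : gamma <= e / 4) (gamma_eps : gamma * (3 + 2 * `|t|) <= eps).

Local Notation nu := (cond_pmf Q j0 l).
Local Notation X := (fun m => (Lam l < Lam m)%R%:R : R).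
Local Notation Y := (fun m => (Lam m == Lam l)%R%:R : R).

Let nu_ge0 j m : 0 <= nu j m.
Proof. by rewrite /cond_pmf; case: eqP. Qed.

Let nu_sum1 j : \sum_m nu j m = 1.
Proof.
rewrite /cond_pmf; case: eqP => _; last by case: Q_pmf.
by rewrite (bigD1 l) //= eqxx big1 ?addr0 // => m /negbTE ->.
Qed.

Let n_gt0 : 0 < n%:R :> R.
Proof. by rewrite ltr0n (leq_ltn_trans (leq0n _) (ltn_ord j0)). Qed.

Lemma treat_prob_near_limit (lv : {ffun 'I_n -> L}) : lv j0 = l ->
  `|treat_prob G lv j0 - clamp t| <= 2 * eps / e +
    (sqr_dev nu X lv + sqr_dev nu Y lv + 1) / (gamma ^+ 2 * n%:R ^+ 2).
Proof.
move=> lv_l; rewrite (treat_prob_clamp lv G_Pi_d) lv_l.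
have -> : mass_above (fun=> 1) (fun i => Lam (lv i)) (Lam l) = \sum_j X (lv j).
  by apply: eq_bigr => a _; rewrite mul1r.
have -> : mass_at (fun=> 1) (fun i => Lam (lv i)) (Lam l) = \sum_j Y (lv j).
  by apply: eq_bigr => a _; rewrite mul1r.
rewrite /sqr_dev !sum_cond_pmf_mean /= ltxx eqxx addr0.
apply: (clamp_ratio_le (kappa := kappa)) => //.
- have := truncn_itv (mulr_ge0 (ler0n R n) (proj1 (andP kappa_itv))).
  by rewrite -/(kappa_n kappa n) -natr1 => /andP[? ?]; apply/andP; split; lra.
- by rewrite mass_at_gt0 mass_at_le1.
- by rewrite divfK ?gt_eqF ?mass_at_gt0 // addrC subrK.
Qed.

Lemma qstar_le : `|qstar Q G (val j0) l - clamp t| <=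
  2 * eps / e + (2 * n%:R + 1) / (gamma ^+ 2 * n%:R ^+ 2).
Proof.
set M := gamma ^+ 2 * n%:R ^+ 2.
pose dev lv := sqr_dev nu X lv + sqr_dev nu Y lv + 1.
have dev_mean : \sum_lv prod_pmf nu lv * dev lv <= 2 * n%:R + 1.
  have X01 m : 0 <= X m <= 1 by case: (_ < _); rewrite ?lexx ?ler01.
  have Y01 m : 0 <= Y m <= 1 by case: (_ == _); rewrite ?lexx ?ler01.
  have devX := sum_prod_pmf_sqr_dev_le nu_ge0 nu_sum1 X01.
  have devY := sum_prod_pmf_sqr_dev_le nu_ge0 nu_sum1 Y01.
  rewrite /dev; under eq_bigr do rewrite !mulrDr mulr1.
  by rewrite !big_split /= sum_prod_pmf //; lra.
have pointwise lv : prod_pmf nu lv * `|treat_prob G lv j0 - clamp t| <=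
    prod_pmf nu lv * (2 * eps / e + dev lv / M).
  have [lv_l|lv_l] := eqVneq (lv j0) l.
    by rewrite ler_wpM2l ?prod_pmf_ge0 ?treat_prob_near_limit.
  by rewrite /prod_pmf (bigD1 j0) //= /cond_pmf eqxx (negbTE lv_l) !mul0r.
rewrite qstar_cond_expectation ?gt_eqF //.
have -> : clamp t = \sum_lv prod_pmf nu lv * clamp t.
  by rewrite -big_distrl /= sum_prod_pmf // mul1r.
rewrite -sumrB; apply: le_trans (ler_norm_sum _ _ _) _.
under eq_bigr do rewrite -mulrBr normrM ger0_norm ?prod_pmf_ge0 //.
apply: le_trans (ler_sum _ (fun lv _ => pointwise lv)) _.
under eq_bigr do rewrite mulrDr.
rewrite big_split /= -big_distrl /= sum_prod_pmf // mul1r lerD2l.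
under eq_bigr do rewrite mulrA.
by rewrite -mulr_suml ler_pM2r ?invr_gt0 ?mulr_gt0 ?exprn_gt0.
Qed.

End Cluster.

End Convergence.

Theorem mainTheorem6 (R : realType) (L : finType) (Q : L -> R) (Lam : L -> R)
  (kappa : R) (Gs : forall n : nat, regime R L n) (i : nat) (l : L) :
  is_pmf Q ->
  0 <= kappa <= 1 ->
  (forall n, in_Pi_d (kappa_n kappa n) Lam (Gs n)) ->
  0 < Q l ->
  (fun n => qstar Q (Gs n) i l) @ \oo --> q0 Q Lam kappa l.
Proof.
move=> Q_pmf kappa_itv G_Pi_d Q_l_gt0; rewrite q0_clamp //.
set e := mass_at Q Lam (Lam l); set t := (_ / e).
have e_gt0 : 0 < e by apply: mass_at_gt0.
apply/cvgrPdist_le => eps eps_gt0.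
pose eps' := eps * e / (2 + e).
have eps'_gt0 : 0 < eps' by rewrite divr_gt0 ?mulr_gt0 //; lra.
pose gamma := Num.min (e / 4) (eps' / (3 + 2 * `|t|)).
have den_gt0 : 0 < 3 + 2 * `|t| by have := normr_ge0 t; lra.
have gamma_gt0 : 0 < gamma by rewrite lt_min divr_gt0 //= divr_gt0.
have gamma_le : gamma <= e / 4 by rewrite ge_min lexx.
have gamma_eps : gamma * (3 + 2 * `|t|) <= eps'.
  by rewrite -ler_pdivlMr // ge_min lexx orbT.
near=> n.
have i_lt_n : (i < n)%N by near: n; exact: nbhs_infty_gt.
rewrite distrC -[i]/(val (Ordinal i_lt_n)).
apply: le_trans (qstar_le Q_pmf kappa_itv Q_l_gt0 (Ordinal i_lt_n) (G_Pi_d n)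
  gamma_gt0 gamma_le gamma_eps) _.
have -> : eps = 2 * eps' / e + eps' by rewrite /eps'; field; apply/andP; split; lra.
rewrite lerD2l quadratic_tail_le ?exprn_gt0 //.
- by rewrite ler1n; near: n; exact: nbhs_infty_gt.
- by near: n; exact: nbhs_infty_ger.
Unshelve. all: end_near.
Qed.
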